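(* Let $A$ be an integral domain with quotient field $K$, so that $\mathrm{reg}(A) = A\setminus\{0\}$. Then the following are equivalent: (a) $A$ is Egyptian. (b) $A$ is the only $\mathrm{reg}(A)$-regular $\mathrm{reg}(A)$-factroid of $A$ containing $1$. (c) $K$ is the only $\mathrm{reg}(A)$-factroid of $K$ (viewed as an $A$-module) containing $1$. More generally, the Egyptian elements of $A$ (resp., $K$) are precisely the elements of the smallest $\mathrm{reg}(A)$-regular $\mathrm{reg}(A)$-factroid $G^{\mathrm{reg}(A)}_A(1)$ of $A$ (resp., the smallest $\mathrm{reg}(A)$-factroid $[1]^{\mathrm{reg}(A)}_K$ of $K$) containing $1$.
   Context: For a subset $T$ of a ring $A$ and an $A$-module $M$, a $T$-factroid of $M$ is an additive subgroup $F$ of $M$ such that for all $x\in M$ and $t\in T$, $tx\in F$ implies $x\in F$; $[S]^T_M$ denotes the smallest $T$-factroid of $M$ containing $S\subseteq M$. For a multiplicative set $W$ and $T\subseteq A$, a $W$-factroid $F$ of $M$ is $T$-regular if for all $h\in T$ and $x\in M$, $hx\in[hF]^W_M$ implies $x\in F$ (where $hF=\{hy\mid y\in F\}$). $G^{W}_A(1):=\{a\in A\mid ha\in[h]^W_A \text{ for some } h\in W\}$. $\mathrm{reg}(A)$ is the set of nonzerodivisors of $A$. The reciprocal complement $R(A)$ is the set of all finite sums $\frac{1}{d_1}+\cdots+\frac{1}{d_n}\in K$ with $d_i\in A\setminus\{0\}$; an element of $K$ is Egyptian if it lies in $R(A)$, an element $a\in A$ is Egyptian if $a\in R(A)$, and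 $A$ is Egyptian if every element of $A$ (equivalently of $K$) is Egyptian. *)

From HB Require Import structures.
From mathcomp Require Import all_boot all_order all_algebra.
From mathcomp Require Import fraction.
Set Implicit Arguments. Unset Strict Implicit. Unset Printing Implicit Defensive.
Import GRing.Theory.
Local Open Scope ring_scope.

Definition reg (A : comRingType) (a : A) : Prop :=
  forall b : A, a * b = 0 -> b = 0.

Definition is_factroid (A : comRingType) (M : zmodType) (act : A -> M -> M)
  (T : A -> Prop) (F : M -> Prop) : Prop :=
  [/\ F 0,
      (forall x y, F x -> F y -> F (x - y)) &
      (forall (x : M) (t : A), T t -> F (act t x) -> F x)].

Definition gen_factroid (A : comRingType) (M : zmodType) (act : A -> M -> M)
  (T : A -> Prop) (S : M -> Prop) : M -> Prop :=
  fun x => forall F : M -> Prop, is_factroid act T F ->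
             (forall y, S y -> F y) -> F x.

Definition scale_set (A : comRingType) (M : zmodType) (act : A -> M -> M)
  (h : A) (F : M -> Prop) : M -> Prop :=
  fun z => exists2 y, F y & z = act h y.

Definition is_regular (A : comRingType) (M : zmodType) (act : A -> M -> M)
  (W T : A -> Prop) (F : M -> Prop) : Prop :=
  forall (h : A) (x : M), T h ->
    gen_factroid act W (scale_set act h F) (act h x) -> F x.

Definition mulact (A : comRingType) : A -> A -> A := fun a x => a * x.

Definition G1 (A : comRingType) (W : A -> Prop) : A -> Prop :=
  fun a => exists2 h, W h & gen_factroid (@mulact A) W (fun y => y = h) (h * a).

Definition toK (A : idomainType) : A -> {fraction A} := @tofrac A.

Definition Kact (A : idomainType) : A -> {fraction A} -> {fraction A} :=
  fun a x => toK a * x.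

Definition egyptian (A : idomainType) (x : {fraction A}) : Prop :=
  exists s : seq A, [/\ s != [::], all (fun d => d != 0) s &
                        x = \sum_(d <- s) (toK d)^-1].

Definition egyptian_domain (A : idomainType) : Prop :=
  forall a : A, egyptian (toK a).

(* R(A) is a reg-factroid of K: if t x = 1/d_1 + ... + 1/d_n with t <> 0, then
   x = 1/(t d_1) + ... + 1/(t d_n).  Every reg-factroid of K containing 1 contains
   each 1/d, since d (1/d) = 1, hence contains R(A); so R(A) = [1]_K, and as every
   element of K becomes an element of A after multiplication by some d <> 0, K is
   the only such factroid exactly when A is Egyptian.
   On A, for h <> 0 the set of y with y/h in R(A) is a reg-factroid containing h,
   so G(1) is contained in R(A).  Conversely, if a = 1/d_1 + ... + 1/d_n and
   h = d_1 ... d_n, then h a is the sum of the products h_i of all d_j with j <> i,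
   and each h_i lies in every reg-factroid containing h because d_i h_i = h. *)

From HB Require Import structures.
From mathcomp Require Import all_boot all_order all_algebra.
From mathcomp Require Import fraction.
From mathcomp Require Import ring.
Set Implicit Arguments.
Unset Strict Implicit.
Unset Printing Implicit Defensive.
Import GRing.Theory.
Local Open Scope ring_scope.

Section Factroids.
Variables (A : comRingType) (M : zmodType) (act : A -> M -> M) (T : A -> Prop).
Implicit Type F : M -> Prop.

Lemma factroidD F : is_factroid act T F -> forall x y, F x -> F y -> F (x + y).
Proof.
move=> [F0 FB _] x y Fx Fy.
by have := FB _ _ Fx (FB _ _ F0 Fy); rewrite sub0r opprK.
Qed.

Lemma factroid_ext F F' :
  (forall x, F x <-> F' x) -> is_factroid act T F -> is_factroid act T F'.
Proof.
move=> FF' [F0 FB Fd]; split=> [|x y|x t Tt]; rewrite -!FF'; first exact: F0.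
  exact: FB.
exact: Fd.
Qed.

Lemma factroid_preim (N : zmodType) (actN : A -> N -> N) (f : M -> N)
    (F : N -> Prop) :
  {morph f : x y / x - y} -> (forall t x, f (act t x) = actN t (f x)) ->
  is_factroid actN T F -> is_factroid act T (fun x => F (f x)).
Proof.
move=> fB fact [F0 FB Fd]; split=> [|x y Fx Fy|x t Tt].
- by rewrite -(subrr 0) fB subrr.
- by rewrite fB; apply: FB.
- by rewrite fact; apply: Fd.
Qed.

End Factroids.

Lemma G1_sub_regular (A : comRingType) (W : A -> Prop) (F : A -> Prop) :
  is_regular (@mulact A) W W F -> F 1 -> forall a, G1 W a -> F a.
Proof.
move=> regF F1 a [h Wh ha]; apply: (regF h a Wh) => F' factF' hF'.
by apply: ha factF' _ => _ ->; apply: hF'; exists 1; rewrite // /mulact mulr1.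
Qed.

HB.instance Definition _ (A : idomainType) :=
  GRing.RMorphism.copy (@toK A) (@tofrac A).

Section FractionDenominators.
Variable A : idomainType.
Local Open Scope quotient_scope.

Lemma fraction_clear_denominator (x : {fraction A}) :
  exists b a : A, b != 0 /\ toK b * x = toK a.
Proof.
elim/quotW: x => r; exists (frac r).2, (frac r).1; split; first exact: denom_ratioP.
rewrite /toK /FracField.tofrac; unlock.
change (FracField.mul (\pi_{fraction A} (Ratio \d_r 1)) (\pi_{fraction A} r)
        = \pi_{fraction A} (Ratio \n_r 1)).
rewrite -FracField.pi_mul; apply/eqP; rewrite FracField.equivf_def /FracField.mulf.
by rewrite !numden_Ratio ?mul1r ?mulr1 ?oner_neq0 ?denom_ratioP.
Qed.

End FractionDenominators.

Section Egyptian.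
Variable A : idomainType.
Local Notation K := {fraction A}.

Lemma regP (t : A) : reg t <-> t != 0.
Proof.
split=> [regt|tn b]; last by move/eqP; rewrite mulf_eq0 (negbTE tn) => /eqP.
by apply: contra_neq (@oner_neq0 A) => t0; apply: regt; rewrite t0 mul0r.
Qed.

Lemma toK_eq (p q : A) : (toK p == toK q) = (p == q).
Proof. exact: tofrac_eq. Qed.

Lemma toK_eq0 (t : A) : (toK t == 0) = (t == 0).
Proof. exact: tofrac_eq0. Qed.

Lemma egyptian1 : egyptian (1 : K).
Proof. by exists [:: 1]; rewrite /= oner_neq0 big_seq1 rmorph1 invr1. Qed.

Lemma egyptian0 : egyptian (0 : K).
Proof.
exists [:: 1; -1]; rewrite /= oppr_eq0 oner_neq0 big_cons big_seq1.
by rewrite rmorphN rmorph1 invrN invr1 subrr.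
Qed.

Lemma egyptianD (x y : K) : egyptian x -> egyptian y -> egyptian (x + y).
Proof.
move=> [s [s0 sa ->]] [r [_ ra ->]]; exists (s ++ r).
by rewrite all_cat sa ra big_cat; case: s s0 {sa}.
Qed.

Lemma egyptianN (x : K) : egyptian x -> egyptian (- x).
Proof.
move=> [s [s0 sa ->]]; exists (map -%R s); split.
- by case: s s0 {sa}.
- by rewrite all_map; apply/allP => d /(allP sa) /=; rewrite oppr_eq0.
- by rewrite big_map -sumrN; apply: eq_bigr => d _; rewrite rmorphN invrN.
Qed.

Lemma egyptian_mulKr (t : A) (x : K) :
  t != 0 -> egyptian (toK t * x) -> egyptian x.
Proof.
move=> tn [s [s0 sa tx]]; exists (map ( *%R t) s); split.
- by case: s s0 {sa tx}.
- by rewrite all_map; apply/allP => d /(allP sa); exact: mulf_neq0.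
- rewrite big_map; under eq_bigr => d _ do rewrite rmorphM invfM.
  by rewrite -mulr_sumr -tx mulKf ?toK_eq0.
Qed.

Lemma egyptian_factroid : is_factroid (@Kact A) (@reg A) (@egyptian A).
Proof.
split=> [|x y ex ey|x t /regP]; first exact: egyptian0.
  exact: egyptianD ex (egyptianN ey).
exact: egyptian_mulKr.
Qed.

Lemma egyptian_sub_factroid (F : K -> Prop) :
  is_factroid (@Kact A) (@reg A) F -> F 1 -> forall x, egyptian x -> F x.
Proof.
move=> factF F1 x [s [_ sa ->]]; elim: s sa => [|d s IHs] /=.
  by rewrite big_nil; case: factF.
case/andP=> dn sa; rewrite big_cons; apply: (factroidD factF) (IHs sa).
case: factF => _ _ Fd; apply: (Fd _ d); first exact/regP.
by rewrite /Kact mulfV ?toK_eq0.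
Qed.

Lemma egyptian_gen1 (x : K) :
  egyptian x <-> gen_factroid (@Kact A) (@reg A) (fun y => y = 1) x.
Proof.
split=> [ex F factF F1|]; first exact: egyptian_sub_factroid factF (F1 1 erefl) x ex.
by apply; [exact: egyptian_factroid | move=> _ ->; exact: egyptian1].
Qed.

Lemma factroid_fraction_full (F : K -> Prop) :
  is_factroid (@Kact A) (@reg A) F -> (forall a, F (toK a)) -> forall x, F x.
Proof.
move=> [_ _ Fd] FA x; have [b [a [bn bx]]] := fraction_clear_denominator x.
by apply: (Fd _ b); [exact/regP | rewrite /Kact bx].
Qed.

(* The numerator of 1/d_1 + ... + 1/d_n over the denominator d_1 ... d_n. *)
Fixpoint egyptian_num (s : seq A) : A :=
  if s is d :: s' then \prod_(e <- s') e + d * egyptian_num s' else 0.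

Lemma toK_egyptian_num (s : seq A) : all (fun d => d != 0) s ->
  toK (egyptian_num s) = toK (\prod_(d <- s) d) * \sum_(d <- s) (toK d)^-1.
Proof.
elim: s => [_|d s IHs /andP[dn /IHs {}IHs]] /=.
  by rewrite !big_nil mulr0 rmorph0.
rewrite !big_cons rmorphD !rmorphM /= IHs.
by field; rewrite toK_eq0.
Qed.

Lemma factroid_egyptian_num (F : A -> Prop) (s : seq A) :
  is_factroid (@mulact A) (@reg A) F -> all (fun d => d != 0) s ->
  forall m, F (\prod_(d <- s) d * m) -> F (egyptian_num s * m).
Proof.
move=> factF; elim: s => [_ m _|d s IHs /andP[dn sa] m].
  by rewrite mul0r; case: factF.
rewrite big_cons -mulrA => Fdsm; rewrite /= mulrDl -mulrA [d * _]mulrCA.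
apply: (factroidD factF); last by apply: IHs sa _ _; rewrite mulrCA.
by case: factF => _ _ Fd; apply: (Fd _ d) Fdsm; exact/regP.
Qed.

Definition egyptian_div (h : A) : A -> Prop := fun y => egyptian (toK y / toK h).

Lemma egyptian_div_factroid (h : A) :
  is_factroid (@mulact A) (@reg A) (egyptian_div h).
Proof.
apply: factroid_preim egyptian_factroid => [x y|t x]; first by rewrite rmorphB mulrBl.
by rewrite /mulact /Kact rmorphM mulrA.
Qed.

Lemma egyptian_divM (h y : A) :
  h != 0 -> egyptian_div h (h * y) <-> egyptian (toK y).
Proof. by move=> hn; rewrite /egyptian_div rmorphM mulrAC mulfV ?mul1r ?toK_eq0. Qed.

Lemma G1_egyptian (a : A) : G1 (@reg A) a <-> egyptian (toK a).
Proof.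
split=> [[h /regP hn ha]|[s [_ sa sum_a]]].
  apply/(egyptian_divM a hn); apply: ha (egyptian_div_factroid h) _ => _ ->.
  by rewrite -{2}[h]mulr1 egyptian_divM // rmorph1; exact: egyptian1.
exists (\prod_(d <- s) d); first by apply/regP; rewrite prodf_seq_neq0.
move=> F factF Fh; have -> : \prod_(d <- s) d * a = egyptian_num s * 1.
  by apply/eqP; rewrite -toK_eq mulr1 toK_egyptian_num // -sum_a rmorphM.
by apply: factroid_egyptian_num factF sa 1 _; rewrite mulr1; exact: Fh.
Qed.

Lemma G1_factroid : is_factroid (@mulact A) (@reg A) (G1 (@reg A)).
Proof.
apply: factroid_ext (fun a => iff_sym (G1_egyptian a)) _.
by apply: factroid_preim egyptian_factroid => [x y|t x]; rewrite (rmorphB, rmorphM).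
Qed.

Lemma G1_regular : is_regular (@mulact A) (@reg A) (@reg A) (G1 (@reg A)).
Proof.
move=> h x /regP hn hx; apply/G1_egyptian/(egyptian_divM x hn).
apply: hx (egyptian_div_factroid h) _ => _ [y /G1_egyptian Gy ->].
exact/egyptian_divM.
Qed.

Lemma G1_1 : G1 (@reg A) 1.
Proof. by apply/G1_egyptian; rewrite rmorph1; exact: egyptian1. Qed.

End Egyptian.

Theorem corollary7p11 (A : idomainType) :
  [/\ (egyptian_domain A <->
         (forall F : A -> Prop,
            is_factroid (@mulact A) (@reg A) F ->
            is_regular (@mulact A) (@reg A) (@reg A) F ->
            F 1 -> forall a : A, F a)),
      (egyptian_domain A <->
         (forall F : {fraction A} -> Prop,
            is_factroid (@Kact A) (@reg A) F ->
            F 1 -> forall x : {fraction A}, F x)),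
      (* G^{reg}_A(1) is the smallest reg-regular reg-factroid of A containing 1 *)
      [/\ is_factroid (@mulact A) (@reg A) (G1 (@reg A)),
          is_regular (@mulact A) (@reg A) (@reg A) (G1 (@reg A)),
          G1 (@reg A) 1 &
          forall F : A -> Prop,
            is_factroid (@mulact A) (@reg A) F ->
            is_regular (@mulact A) (@reg A) (@reg A) F ->
            F 1 -> forall a, G1 (@reg A) a -> F a],
      (forall a : A, egyptian (toK a) <-> G1 (@reg A) a) &
      (forall x : {fraction A},
          egyptian x <-> gen_factroid (@Kact A) (@reg A) (fun y => y = 1) x)].
Proof.
split.
- split=> [egyA F _ regF F1 a|allF a].
    by apply: (G1_sub_regular regF F1); exact/G1_egyptian.
  by apply/G1_egyptian; exact: allF (@G1_factroid A) (@G1_regular A) (@G1_1 A) a.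
- split=> [egyA F factF F1|allF a].
    by apply: (factroid_fraction_full factF) => a; exact: egyptian_sub_factroid (egyA a).
  exact: allF (@egyptian_factroid A) (@egyptian1 A) _.
- by split=> [||| F _]; [exact: G1_factroid | exact: G1_regular | exact: G1_1 |
                          exact: G1_sub_regular].
- by move=> a; apply: iff_sym; exact: G1_egyptian.
- exact: egyptian_gen1.
Qed.
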